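(* Let $\{F_x : x\in V(G)\}$ be a representation of a restricted frame graph $G$. Let $u,v,w\in V(G)$ be such that $F_u$ is inside $F_v$ and $F_w$ is outside $F_v$. Then every path $P$ in $G$ from $u$ to $w$ either contains $v$ or contains a vertex adjacent to $v$.
   Context: A frame is the boundary of an axis-parallel box $I\times J\subset\mathbb R^2$. A representation of a graph $G$ as a restricted frame graph is a family of frames $\{F_x : x\in V(G)\}$ with $xy\in E(G)$ iff $F_x\cap F_y\neq\emptyset$, satisfying: (1) corners of a frame do not coincide with any point of another frame; (2) the left side of any frame does not intersect any other frame; (3) if the right side of a frame intersects a second frame, this right side intersects both the top and the bottom side of the second frame; (4) if two frames have non-empty intersection, then no frame is entirely contained in the intersection of the two regions bounded by these two frames. $F_2$ is inside $F_1$ (and $F_1$ contains $F_2$) if $F_1\cap F_2=\emptyset$ and $F_2$ lies in the region bounded by $F_1$; $F_2$ is outside $F_1$ if $F_1\cap F_2=\emptyset$ and $F_2$ is not inside $F_1$. *)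

From Stdlib Require Import Reals List.
Open Scope R_scope.

Definition point := (R * R)%type.

(* A frame is the boundary of an axis-parallel box [x1,x2] x [y1,y2]
   with x1 < x2 and y1 < y2. *)
Record frame := mkFrame {
  fx1 : R; fx2 : R; fy1 : R; fy2 : R;
  fx_lt : fx1 < fx2; fy_lt : fy1 < fy2 }.

Definition region (F : frame) (p : point) : Prop :=
  fx1 F <= fst p <= fx2 F /\ fy1 F <= snd p <= fy2 F.

Definition left_side (F : frame) (p : point) : Prop :=
  fst p = fx1 F /\ fy1 F <= snd p <= fy2 F.
Definition right_side (F : frame) (p : point) : Prop :=
  fst p = fx2 F /\ fy1 F <= snd p <= fy2 F.
Definition bottom_side (F : frame) (p : point) : Prop :=
  snd p = fy1 F /\ fx1 F <= fst p <= fx2 F.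
Definition top_side (F : frame) (p : point) : Prop :=
  snd p = fy2 F /\ fx1 F <= fst p <= fx2 F.

Definition on_frame (F : frame) (p : point) : Prop :=
  left_side F p \/ right_side F p \/ bottom_side F p \/ top_side F p.

Definition is_corner (F : frame) (p : point) : Prop :=
  (fst p = fx1 F \/ fst p = fx2 F) /\ (snd p = fy1 F \/ snd p = fy2 F).

Definition meets (A B : point -> Prop) : Prop := exists p, A p /\ B p.

Definition frames_meet (F G : frame) : Prop := meets (on_frame F) (on_frame G).

Definition inside (F2 F1 : frame) : Prop :=
  ~ frames_meet F1 F2 /\ forall p, on_frame F2 p -> region F1 p.

Definition outside (F2 F1 : frame) : Prop :=
  ~ frames_meet F1 F2 /\ ~ inside F2 F1.

Definition restricted_frame_rep {V : Type} (E : V -> V -> Prop)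
    (F : V -> frame) : Prop :=
  (forall x y, x <> y -> (E x y <-> frames_meet (F x) (F y))) /\
  (forall x y p, x <> y -> is_corner (F x) p -> ~ on_frame (F y) p) /\
  (forall x y, x <> y -> ~ meets (left_side (F x)) (on_frame (F y))) /\
  (forall x y, x <> y -> meets (right_side (F x)) (on_frame (F y)) ->
     meets (right_side (F x)) (top_side (F y)) /\
     meets (right_side (F x)) (bottom_side (F y))) /\
  (forall x y, x <> y -> frames_meet (F x) (F y) ->
     forall z, ~ (forall p, on_frame (F z) p ->
                    region (F x) p /\ region (F y) p)).

Definition finite_simple_graph {V : Type} (E : V -> V -> Prop) : Prop :=
  (exists l : list V, forall x, In x l) /\
  (forall x, ~ E x x) /\ (forall x y, E x y -> E y x).

Fixpoint is_walk {V : Type} (E : V -> V -> Prop) (p : list V) : Prop :=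
  match p with
  | x :: ((y :: _) as q) => E x y /\ is_walk E q
  | _ => True
  end.

Definition is_path {V : Type} (E : V -> V -> Prop) (u w : V) (p : list V)
  : Prop :=
  is_walk E p /\ NoDup p /\ hd_error p = Some u /\ hd_error (rev p) = Some w.

(* A frame disjoint from [F_v] lies either inside or outside it: as soon as one of its
   points is strictly inside the box of [F_v], comparing coordinates produces a common
   point of the two boundaries unless the whole frame is strictly inside.  Along a path
   avoiding [v] and its neighbours, consecutive frames meet at a point inside [F_v] that
   is not on [F_v], so "being inside [F_v]" propagates from [u] to [w]. *)
From Stdlib Require Import Reals List Lra Classical.
Open Scope R_scope.

Definition in_interior (F : frame) (p : point) : Prop :=
  fx1 F < fst p < fx2 F /\ fy1 F < snd p < fy2 F.

Ltac solve_on_frame :=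
  first [ left; repeat split; lra | right; solve_on_frame | repeat split; lra ].

Lemma frames_meet_sym (A B : frame) : frames_meet A B -> frames_meet B A.
Proof. intros [p [HA HB]]; exists p; auto. Qed.

Lemma on_frame_region (F : frame) (p : point) : on_frame F p -> region F p.
Proof.
  unfold on_frame, left_side, right_side, bottom_side, top_side, region.
  pose proof (fx_lt F); pose proof (fy_lt F).
  intros [Hs|[Hs|[Hs|Hs]]]; lra.
Qed.

Lemma region_off_frame_interior (F : frame) (p : point) :
  region F p -> ~ on_frame F p -> in_interior F p.
Proof.
  intros [[Hx1 Hx2] [Hy1 Hy2]] Hoff.
  unfold on_frame, left_side, right_side, bottom_side, top_side in Hoff.
  destruct (Req_dec (fst p) (fx1 F)); [exfalso; apply Hoff; solve_on_frame|].
  destruct (Req_dec (fst p) (fx2 F)); [exfalso; apply Hoff; solve_on_frame|].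
  destruct (Req_dec (snd p) (fy1 F)); [exfalso; apply Hoff; solve_on_frame|].
  destruct (Req_dec (snd p) (fy2 F)); [exfalso; apply Hoff; solve_on_frame|].
  split; lra.
Qed.

Lemma interior_point_left_bound (A B : frame) (q : point) :
  ~ frames_meet A B -> on_frame B q -> in_interior A q -> fx1 A < fx1 B.
Proof.
  intros Hdisj Hq [[Hqx1 Hqx2] [Hqy1 Hqy2]].
  destruct q as [qx qy]; simpl in *.
  pose proof (on_frame_region B _ Hq) as [[HBx1 HBx2] [HBy1 HBy2]]; simpl in *.
  destruct (Rlt_le_dec (fx1 A) (fx1 B)) as [|HBA]; [assumption | exfalso].
  destruct (Rle_lt_dec (fy1 A) (fy1 B)).
  { apply Hdisj; exists (fx1 A, fy1 B).
    unfold on_frame, left_side, right_side, bottom_side, top_side; simpl.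
    split; solve_on_frame. }
  destruct (Rle_lt_dec (fy2 B) (fy2 A)).
  { apply Hdisj; exists (fx1 A, fy2 B).
    unfold on_frame, left_side, right_side, bottom_side, top_side; simpl.
    split; solve_on_frame. }
  destruct (Rle_lt_dec (fx2 B) (fx2 A)).
  { apply Hdisj; exists (fx2 B, fy1 A).
    unfold on_frame, left_side, right_side, bottom_side, top_side; simpl.
    split; solve_on_frame. }
  unfold on_frame, left_side, right_side, bottom_side, top_side in Hq; simpl in Hq.
  destruct Hq as [H|[H|[H|H]]]; lra.
Qed.

(* Rotation by a quarter turn, used to obtain the other three bounds from the left one. *)
Definition rot_point (p : point) : point := (- snd p, fst p).
Definition unrot_point (p : point) : point := (snd p, - fst p).

Definition rot_frame (F : frame) : frame :=
  mkFrame (- fy2 F) (- fy1 F) (fx1 F) (fx2 F)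
    (Ropp_lt_contravar _ _ (fy_lt F)) (fx_lt F).

Lemma on_frame_rot (F : frame) (p : point) :
  on_frame F p -> on_frame (rot_frame F) (rot_point p).
Proof.
  destruct p as [x y].
  unfold on_frame, left_side, right_side, bottom_side, top_side; simpl.
  intros [H|[H|[H|H]]]; solve_on_frame.
Qed.

Lemma on_frame_unrot (F : frame) (p : point) :
  on_frame (rot_frame F) p -> on_frame F (unrot_point p).
Proof.
  destruct p as [x y].
  unfold on_frame, left_side, right_side, bottom_side, top_side; simpl.
  intros [H|[H|[H|H]]]; solve_on_frame.
Qed.

Lemma rot_preserves_setting (A B : frame) (q : point) :
  ~ frames_meet A B -> on_frame B q -> in_interior A q ->
  ~ frames_meet (rot_frame A) (rot_frame B) /\
  on_frame (rot_frame B) (rot_point q) /\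
  in_interior (rot_frame A) (rot_point q).
Proof.
  intros Hdisj Hq Hint; split; [|split].
  - intros [p [HA HB]]; apply Hdisj.
    exists (unrot_point p); split; apply on_frame_unrot; assumption.
  - apply on_frame_rot; assumption.
  - destruct q as [x y]; unfold in_interior in *; simpl in *; lra.
Qed.

Lemma interior_point_box_bounds (A B : frame) (q : point) :
  ~ frames_meet A B -> on_frame B q -> in_interior A q ->
  fx1 A < fx1 B /\ fx2 B < fx2 A /\ fy1 A < fy1 B /\ fy2 B < fy2 A.
Proof.
  intros H1 H2 H3.
  pose proof (interior_point_left_bound _ _ _ H1 H2 H3) as Bleft.
  destruct (rot_preserves_setting _ _ _ H1 H2 H3) as [R1 [R2 R3]].
  pose proof (interior_point_left_bound _ _ _ R1 R2 R3) as Btop.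
  destruct (rot_preserves_setting _ _ _ R1 R2 R3) as [S1 [S2 S3]].
  pose proof (interior_point_left_bound _ _ _ S1 S2 S3) as Bright.
  destruct (rot_preserves_setting _ _ _ S1 S2 S3) as [T1 [T2 T3]].
  pose proof (interior_point_left_bound _ _ _ T1 T2 T3) as Bbottom.
  simpl in Btop, Bright, Bbottom; lra.
Qed.

Lemma inside_of_interior_point (A B : frame) (q : point) :
  ~ frames_meet A B -> on_frame B q -> in_interior A q -> inside B A.
Proof.
  intros Hdisj Hq Hint; split; [assumption|].
  destruct (interior_point_box_bounds _ _ _ Hdisj Hq Hint) as [? [? [? ?]]].
  intros p Hp; pose proof (on_frame_region B p Hp); unfold region in *; lra.
Qed.

Section InsidePropagation.

Variables (V : Type) (E : V -> V -> Prop) (F : V -> frame).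
Hypothesis adjacent_iff_meet :
  forall x y, x <> y -> (E x y <-> frames_meet (F x) (F y)).
Variable v : V.

Lemma inside_adjacent_inside (x y : V) :
  inside (F x) (F v) -> E x y -> y <> v -> ~ E y v -> inside (F y) (F v).
Proof.
  intros Hx Exy Hyv Hnadj.
  destruct (classic (x = y)) as [<- | Hxy]; [assumption|].
  assert (Hdisj : ~ frames_meet (F v) (F y)).
  { intro Hm; apply Hnadj, adjacent_iff_meet, frames_meet_sym; assumption. }
  destruct (proj1 (adjacent_iff_meet x y Hxy) Exy) as [q [Hqx Hqy]].
  apply (inside_of_interior_point _ _ q Hdisj Hqy).
  apply region_off_frame_interior; [exact (proj2 Hx q Hqx)|].
  intro Hqv; apply Hdisj; exists q; split; assumption.
Qed.

Lemma walk_stays_inside (l : list V) (x : V) :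
  is_walk E (x :: l) -> inside (F x) (F v) ->
  (forall z, In z l -> z <> v /\ ~ E z v) ->
  forall y, In y (x :: l) -> inside (F y) (F v).
Proof.
  revert x; induction l as [|a l IH]; intros x Hwalk Hx Havoid y Hy.
  - destruct Hy as [<- | []]; assumption.
  - destruct Hwalk as [Exa Hwalk].
    destruct Hy as [<- | Hy]; [assumption|].
    destruct (Havoid a (or_introl eq_refl)) as [Hav Hnadj].
    apply (IH a); [assumption | | intros z Hz; apply Havoid; right; assumption | assumption].
    exact (inside_adjacent_inside x a Hx Exa Hav Hnadj).
Qed.

End InsidePropagation.

Lemma In_of_hd_error_rev {A : Type} (l : list A) (a : A) :
  hd_error (rev l) = Some a -> In a l.
Proof.
  intro H; apply in_rev.
  destruct (rev l); [discriminate|].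
  injection H as ->; left; reflexivity.
Qed.

Theorem lemma3p5 (V : Type) (E : V -> V -> Prop) (F : V -> frame)
  (HG : finite_simple_graph E) (HF : restricted_frame_rep E F)
  (u v w : V) (Huv : inside (F u) (F v)) (Hwv : outside (F w) (F v))
  (P : list V) (HP : is_path E u w P) :
  exists z, In z P /\ (z = v \/ E z v).
Proof.
  destruct HF as [adjacent_iff_meet _].
  destruct HP as [Hwalk [_ [Hhead Hlast]]].
  apply NNPP; intro Hnone.
  assert (Havoid : forall z, In z P -> z <> v /\ ~ E z v).
  { intros z Hz; split; intro H; apply Hnone; exists z; auto. }
  destruct P as [|x l]; [discriminate|].
  injection Hhead as ->.
  apply (proj2 Hwv).
  apply (walk_stays_inside V E F adjacent_iff_meet v l u Hwalk Huv);
    [intros z Hz; apply Havoid; right; assumption|].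
  exact (In_of_hd_error_rev _ _ Hlast).
Qed.
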